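(* Let $w\in\mathbb{C}^L$ be real and nonnegative, $a$ a positive integer dividing $L$, $N=L/a$, $M$ a positive integer, and let $w_r$, $M_L$, $b_L$, $\phi_{m,n,r}$ be as in the context. For $s,t\in\mathbb{Z}_L$ and $n,r\in\mathbb{Z}_N$ define $\beta_{nr}(s,t)=w_r[t-na]\,w_r[t-na-s]$. Let $I$ be any admissible selection function for which $M[n,r]=M_{\mathrm{g}}$ for all $n,r$, for some $M_{\mathrm{g}}\in\{1,2,\dots,L\}$. If $$\text{for all }t\in\mathbb{Z}_L:\quad\sum_{n=0}^{N-1}\sum_{r=0}^{N-1}I[n,r]\Big(\beta_{nr}(0,t)-\sum_{k\neq0}\beta_{nr}(kM_{\mathrm{g}},t)\Big)>0,$$ where the inner sum runs over integers $k\neq 0$ with $k\in\{\lceil (t-(L-1))/M_{\mathrm{g}}\rceil,\dots,\lfloor t/M_{\mathrm{g}}\rfloor\}$ (with $t$ represented in $\{0,\dots,L-1\}$), then the superposition system $\mathscr{F}(I)$ is a frame for $\mathbb{C}^L$.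
   Context: Vectors in $\mathbb{C}^L$ are indexed by $t\in\mathbb{Z}_L$ (represented by $\{0,\dots,L-1\}$), with $\langle x,y\rangle=\sum_t x[t]\overline{y[t]}$. $\mathcal{T}_kw[t]=w[t-k]$ (indices mod $L$), $\mathcal{M}_\beta w[t]=w[t]e^{2\pi i\beta t/L}$. A finite family $\{\phi_j\}$ is a frame for $\mathbb{C}^L$ if there exist $0<A\le B<\infty$ with $A\|x\|^2\le\sum_j|\langle x,\phi_j\rangle|^2\le B\|x\|^2$ for all $x$. Superposition windows: $w_r=\sum_{n=0}^{r}\mathcal{T}_{na}w$ for $r\in\mathbb{Z}_N$ (identified with $\{0,\dots,N-1\}$). Let $M_L=\operatorname{lcm}(1,2,\dots,\max(L,M))$, $b_L=L/M_L$, and $\phi_{m,n,r}=\mathcal{M}_{mb_L}\mathcal{T}_{na}w_r$ for $m\in\mathbb{Z}_{M_L}$, $n,r\in\mathbb{Z}_N$. An ordered partition function is a map $\widetilde I:\mathbb{Z}_N\times\mathbb{Z}_N\to\{0,1\}$, not identically zero, such that (i) if $\widetilde I[n,r]=1$ then $\widetilde I[n,r']=0$ for all $r'\neq r$; (ii) if $\widetilde I[n,r]=1$ then $\widetilde I[n',r']=0$ for all $n'\in\{n+1,\dots,n+r\}$ (mod $N$) and all $r'$; (iii) if $\widetilde I[n,r]=1$ then $\widetilde I[n+r+1,r']=1$ for exactly one $r'\in\mathbb{Z}_N$ (indices mod $N$). Given an ordered partition function $\widetilde I$ and a function $M[n,r]$ on $\mathbb{Z}_N\times\mathbb{Z}_N$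 with positive integer values dividing $M_L$, an admissible selection function is a map $I:\mathbb{Z}_{M_L}\times\mathbb{Z}_N\times\mathbb{Z}_N\to\{0,1\}$ with $I[0,n,r]=\widetilde I[n,r]$ for all $n,r$, and such that $I[0,n,r]=1$ implies $I[(M_L/M[n,r])m,n,r]=1$ for all $m\in\mathbb{Z}_{M[n,r]}$. One writes $I[n,r]$ for $I[0,n,r]$. The superposition system is $\mathscr{F}(I)=\{\phi_{m,n,r}: I[m,n,r]=1\}$. *)

From mathcomp Require Import all_boot all_order all_algebra.
From mathcomp Require Import reals trigo.
From mathcomp Require Export complex.
Set Implicit Arguments.
Unset Strict Implicit.
Unset Printing Implicit Defensive.
Import Order.TTheory GRing.Theory Num.Theory.
Local Open Scope ring_scope.
Local Open Scope complex_scope.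

(* x[z] for an integer index z, read modulo L. *)
Definition vat (R : realType) (L : nat) (x : 'I_L -> R[i]) (z : int) : R[i] :=
  match @insub nat (fun k => (k < L)%N) 'I_L (absz (z %% L%:Z)%Z) with
  | Some t => x t
  | None => 0
  end.

Definition trans (R : realType) (L : nat) (k : int) (x : 'I_L -> R[i])
  : 'I_L -> R[i] := fun t => vat x (t%:Z - k).

Definition expi (R : realType) (theta : R) : R[i] :=
  (cos theta)%:C + 'i * (sin theta)%:C.

Definition modul (R : realType) (L : nat) (beta : R) (x : 'I_L -> R[i])
  : 'I_L -> R[i] :=
  fun t => x t * expi (2 * pi * beta * (nat_of_ord t)%:R / L%:R).

Definition supwin (R : realType) (L a : nat) (w : 'I_L -> R[i]) (r : nat)
  : 'I_L -> R[i] :=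
  fun t => \sum_(n < r.+1) trans (n * a)%N%:Z w t.

Definition ML (L M : nat) : nat := \big[lcmn/1%N]_(1 <= j < (maxn L M).+1) j.

Definition bL (R : realType) (L M : nat) : R := L%:R / (ML L M)%:R.

Definition phi (R : realType) (L a M : nat) (w : 'I_L -> R[i]) (m n r : nat)
  : 'I_L -> R[i] :=
  modul (m%:R * bL R L M) (trans (n * a)%N%:Z (supwin a w r)).

Definition ip (R : realType) (L : nat) (x y : 'I_L -> R[i]) : R[i] :=
  \sum_(t < L) x t * (y t)^*.
Definition nsq (R : realType) (L : nat) (x : 'I_L -> R[i]) : R[i] :=
  \sum_(t < L) `|x t| ^+ 2.

Definition is_frame (R : realType) (L : nat) (J : finType) (P : pred J)
  (f : J -> 'I_L -> R[i]) : Prop :=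
  exists A B : R, 0 < A /\ A <= B /\
    forall x : 'I_L -> R[i],
      A%:C * nsq x <= \sum_(j | P j) `|ip x (f j)| ^+ 2 <= B%:C * nsq x.

Definition ordered_partition (N : nat) (It : 'I_N -> 'I_N -> bool) : Prop :=
  (exists n r, It n r) /\
  (forall n r r', It n r -> r' != r -> ~~ It n r') /\
  (forall n r, It n r ->
     forall (n' : 'I_N) r', (exists2 j, (1 <= j <= r)%N & nat_of_ord n' = ((n + j) %% N)%N)
       -> ~~ It n' r') /\
  (forall n r, It n r ->
     forall n' : 'I_N, nat_of_ord n' = ((n + r + 1) %% N)%N ->
       #|[pred r' : 'I_N | It n' r']| = 1%N).

Definition admissible (L M N : nat) (It : 'I_N -> 'I_N -> bool)
  (Mf : 'I_N -> 'I_N -> nat) (I : 'I_(ML L M) -> 'I_N -> 'I_N -> bool) : Prop :=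
  (forall n r, (0 < Mf n r)%N /\ (Mf n r %| ML L M)%N) /\
  (forall (m : 'I_(ML L M)) n r, nat_of_ord m = 0%N -> I m n r = It n r) /\
  (forall n r, It n r ->
     forall m : nat, (m < Mf n r)%N ->
       forall j : 'I_(ML L M), nat_of_ord j = (ML L M %/ Mf n r * m)%N -> I j n r).

Definition betanr (R : realType) (L a : nat) (w : 'I_L -> R[i]) (n r : nat)
  (s t : int) : R[i] :=
  vat (supwin a w r) (t - (n * a)%N%:Z) * vat (supwin a w r) (t - (n * a)%N%:Z - s).

(* The integers k <> 0 with ceil((t-(L-1))/Mg) <= k <= floor(t/Mg), i.e.
   t - (L-1) <= k*Mg <= t (all such k lie in [-L, L]). *)
Definition krange (L Mg : nat) (t : int) : seq int :=
  [seq k <- [seq (j%:Z - L%:Z)%R | j <- iota 0 (2 * L).+1]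
     | (k != 0) && (t - (L%:Z - 1) <= k * Mg%:Z <= t)].

From mathcomp Require Import all_boot all_order all_algebra.
From mathcomp Require Import reals trigo complex.
From mathcomp Require Import ring lra zify.
Set Implicit Arguments.
Unset Strict Implicit.
Unset Printing Implicit Defensive.
Import Order.TTheory GRing.Theory Num.Theory.
Local Open Scope ring_scope.

(* Fix a window g = T_{na} w_r with It[n,r] = 1 and write d = M_L / M_g.  The
   modulations m = d m', m' < M_g, have frequencies the M_g-th roots of unity,
   so summing |<x, phi_{dm',n,r}>|^2 over m' gives the aliased Parseval identity
   M_g sum_{t = t' mod M_g} x_t g_t conj(x_t' g_t').  Keeping the diagonal and
   bounding the off-diagonal part by AM-GM shows that this is at least
   M_g sum_t |x_t|^2 (g_t^2 - sum_{t' alias of t} g_t g_t'), which is the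
   (n,r) summand of the hypothesis.  Summing over the ordered partition, the
   frame sum dominates M_g sum_t |x_t|^2 H(t) with H > 0, a lower frame bound;
   an upper bound is |<x, f>|^2 <= L ||f||^2 ||x||^2. *)

Section SumInequalities.
Variable C : numDomainType.

Lemma ler_sum_subset (I : finType) (P Q : pred I) (F : I -> C) :
  {subset P <= Q} -> (forall i, 0 <= F i) ->
  \sum_(i | P i) F i <= \sum_(i | Q i) F i.
Proof.
move=> sPQ F_ge0; rewrite [leRHS](bigID P) /=.
rewrite (eq_bigl P) ?lerDl ?sumr_ge0 // => i.
by apply/andP/idP => [[]//| Pi]; split=> //; apply: sPQ.
Qed.

Lemma sum_mul_sym_le (I : finType) (P : I -> I -> bool) (u : I -> C)
    (G : I -> I -> C) :
  (forall i j, P i j = P j i) -> (forall i j, G i j = G j i) ->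
  (forall i, 0 <= u i) -> (forall i j, 0 <= G i j) ->
  \sum_i \sum_(j | P i j) u i * u j * G i j <=
  \sum_i \sum_(j | P i j) u i ^+ 2 * G i j.
Proof.
move=> symP symG u_ge0 G_ge0.
have sum_swap : \sum_i \sum_(j | P i j) u j ^+ 2 * G i j =
                \sum_i \sum_(j | P i j) u i ^+ 2 * G i j.
  rewrite (exchange_big_dep xpredT) //=; apply: eq_bigr => i _.
  by apply: eq_big => [j|j _]; [rewrite symP | rewrite symG].
have le2K (x y : C) : x *+ 2 <= y *+ 2 -> x <= y by rewrite lerMn2r.
apply: le2K; rewrite [leRHS]mulr2n -{1}sum_swap -big_split /= -sumrMnl.
apply: ler_sum => i _; rewrite -sumrMnl -big_split /=; apply: ler_sum => j _.
rewrite -mulrDl -mulrnAl ler_wpM2r // addrC.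
exact: (real_leif_mean_square_scaled (ger0_real (u_ge0 i)) (ger0_real (u_ge0 j))).1.
Qed.

End SumInequalities.

Lemma sum_expr_root_unity (F : idomainType) (c : F) n :
  (0 < n)%N -> c ^+ n = 1 -> \sum_(m < n) c ^+ m = if c == 1 then n%:R else 0.
Proof.
move=> n_gt0 cn1; have [->|c_neq1] := eqVneq c 1.
  by rewrite (eq_bigr (fun _ => 1)) ?sumr_const ?card_ord // => m _; rewrite expr1n.
have := subrX1 c n; rewrite cn1 subrr => /esym /eqP.
by rewrite mulf_eq0 subr_eq0 (negbTE c_neq1) => /eqP.
Qed.

Lemma sum_dvdn_ord (V : nmodType) (F : nat -> V) d K : (0 < d)%N ->
  \sum_(m < d * K | (d %| m)%N) F m = \sum_(m < K) F (d * m)%N.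
Proof.
move=> d_gt0; rewrite -(big_mkord (fun m => d %| m)%N).
transitivity (\sum_(0 <= m < K) F (d * m)%N); last by rewrite big_mkord.
elim: K => [|K IH]; first by rewrite muln0 !big_geq.
rewrite mulnSr (@big_cat_nat _ _ _ (d * K)) //= ?leq_addr // IH big_nat_recr //=.
congr (_ + _); rewrite big_ltn_cond; last by rewrite -{1}[(d * K)%N]addn0 ltn_add2l.
rewrite dvdn_mulr // big_nat_cond big1 ?addr0 // => i /andP[/andP[lo hi] /dvdnP [q iE]].
by move: lo hi; rewrite iE [(q * d)%N]mulnC -mulnSr !ltn_pmul2l //; lia.
Qed.

Lemma sum_triple (V : nmodType) (I J K : finType) (P : I -> J -> K -> bool)
    (F : I -> J -> K -> V) :
  \sum_(p : I * J * K | P p.1.1 p.1.2 p.2) F p.1.1 p.1.2 p.2 =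
  \sum_j \sum_k \sum_(i | P i j k) F i j k.
Proof.
rewrite big_mkcond -(pair_bigA _ (fun q k => if P q.1 q.2 k then F q.1 q.2 k else 0)).
rewrite -(pair_bigA _ (fun i j => \sum_k if P i j k then F i j k else 0)) /=.
rewrite exchange_big; apply: eq_bigr => j _; rewrite exchange_big.
by apply: eq_bigr => k _; rewrite -big_mkcond.
Qed.

Section RootOfUnity.
Variable R : realType.

Lemma expiE (th : R) : expi th = (cos th +i* sin th)%C.
Proof. by rewrite /expi; simpc. Qed.

Lemma expiD (x y : R) : expi (x + y) = expi x * expi y.
Proof. by rewrite !expiE sinD cosD; simpc; rewrite (addrC (sin x * _)). Qed.

Lemma expi0 : expi (0 : R) = 1.
Proof. by rewrite expiE cos0 sin0. Qed.

Lemma expiMn n (th : R) : expi (n%:R * th) = expi th ^+ n.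
Proof.
elim: n => [|n IH]; first by rewrite mul0r expi0 expr0.
by rewrite -addn1 natrD mulrDl mul1r expiD IH exprD expr1.
Qed.

Lemma conj_expi (th : R) : (expi th)^* = (expi th)^-1.
Proof.
apply/esym/mulr1_eq; rewrite !expiE; simpc.
by rewrite cos2Dsin2 (mulrC (sin th)) addNr.
Qed.

Lemma expi_neq1 (th : R) : 0 < th < pi *+ 2 -> expi th != 1.
Proof.
move=> /andP[th_gt0 th_lt2pi]; rewrite expiE; apply/negP => /eqP [cos1 sin0].
have [th_ltpi|th_gepi] := ltP th pi.
  by move: sin0; move/eqP; rewrite gt_eqF // sin_gt0_pi // th_gt0 th_ltpi.
have [th_pi|th_neqpi] := eqVneq th pi; first by move: cos1; rewrite th_pi cospi; lra.
have pi_lt : pi < th by rewrite lt_neqAle eq_sym th_neqpi th_gepi.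
have : 0 < sin (th - pi) by apply: sin_gt0_pi; rewrite subr_gt0 pi_lt ltrBlDr -mulr2n.
by rewrite -oppr_lt0 -sinDpi subrK sin0 ltxx.
Qed.

Definition zeta (n : nat) : R[i] := expi (2 * pi / n%:R).

Lemma conj_zetaX n k : (zeta n ^+ k)^* = (zeta n ^+ k)^-1.
Proof. by rewrite -expiMn conj_expi. Qed.

Lemma zeta_prim n : (0 < n)%N -> n.-primitive_root (zeta n).
Proof.
move=> n_gt0; apply/andP; split => //; apply/forallP => i; rewrite unity_rootE.
have n_neq0 : n%:R != 0 :> R by rewrite pnatr_eq0 -lt0n.
rewrite /zeta -expiMn mulrCA.
have [->|i1_neq] := eqVneq i.+1 n.
  by rewrite divff // mulr1 expiE mulr_natl cos2pi sin2pi eqxx.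
have i1_lt : (i.+1 < n)%N by rewrite ltn_neqAle i1_neq ltn_ord.
pose q : R := i.+1%:R / n%:R.
have q_gt0 : 0 < q by rewrite divr_gt0 ?ltr0n.
have q_lt1 : q < 1 by rewrite ltr_pdivrMr ?ltr0n // mul1r ltr_nat.
suff /expi_neq1/negbTE -> : 0 < 2 * pi * q < pi *+ 2 by [].
rewrite -[pi *+ 2]mulr_natl; have := @pi_gt0 R.
by clearbody q; move=> pi_gt0; apply/andP; split; nra.
Qed.

Lemma sum_normr_dft L n (y : 'I_L -> R[i]) : (0 < n)%N ->
  \sum_(m < n) `|\sum_(t : 'I_L) y t * (zeta n ^+ (m * t))^*| ^+ 2 =
  n%:R * \sum_(t : 'I_L) \sum_(t' : 'I_L | t == t' %[mod n]) y t * (y t')^*.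
Proof.
move=> n_gt0; have z_prim := zeta_prim n_gt0; set z := zeta n in z_prim *.
have zX_neq0 k : z ^+ k != 0 by rewrite expf_neq0 // (prim_root_eq0 z_prim) -lt0n.
pose c (t t' : 'I_L) := z ^+ t' / z ^+ t.
have cX m t t' : c t t' ^+ m = z ^+ (m * t') / z ^+ (m * t).
  by rewrite exprMn exprVn -!exprM !(mulnC m).
transitivity (\sum_(m < n) \sum_t \sum_t' y t * (y t')^* * c t t' ^+ m).
  apply: eq_bigr => m _; rewrite normCK rmorph_sum mulr_suml.
  apply: eq_bigr => t _; rewrite mulr_sumr; apply: eq_bigr => t' _.
  by rewrite rmorphM /= conjCK conj_zetaX cX; ring.
rewrite exchange_big mulr_sumr; apply: eq_bigr => t _.
rewrite exchange_big mulr_sumr [RHS]big_mkcond; apply: eq_bigr => t' _.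
rewrite -mulr_sumr sum_expr_root_unity //; last first.
  by rewrite cX !exprM (prim_expr_order z_prim) !expr1n divr1.
have -> : (c t t' == 1) = (t == t' %[mod n]).
  by rewrite -(inj_eq (mulIf (zX_neq0 t))) divfK // mul1r (eq_prim_root_expr z_prim) eq_sym.
by case: ifP; rewrite ?mulr0 // mulrC.
Qed.

End RootOfUnity.

Arguments zeta {R}.

Section WindowedDFT.
Variable R : realType.

Lemma sum_normr_dft_mul_ge L n (x g : 'I_L -> R[i]) :
  (0 < n)%N -> (forall t, 0 <= g t) ->
  n%:R * \sum_t `|x t| ^+ 2 *
      (g t * g t - \sum_(t' | (t' != t) && (t == t' %[mod n])) g t * g t')
  <= \sum_(m < n) `|\sum_(t : 'I_L) (x t * g t) * (zeta n ^+ (m * t))^*| ^+ 2.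
Proof.
move=> n_gt0 g_ge0; have := sum_normr_dft (fun t => x t * g t) n_gt0.
set Z := \sum_(t : 'I_L) \sum_(t' | _) _ => dftE.
have Z_ge0 : 0 <= Z.
  have n_pos : 0 < n%:R :> R[i] by rewrite ltr0n.
  by rewrite -(pmulr_rge0 _ n_pos) -dftE sumr_ge0 // => m _; rewrite exprn_ge0.
rewrite dftE ler_pM2l ?ltr0n //.
pose P (t t' : 'I_L) := (t == t' %[mod n]) && (t' != t).
pose D := \sum_t `|x t| ^+ 2 * (g t * g t).
pose O := \sum_t \sum_(t' | P t t') (x t * g t) * (x t' * g t')^*.
pose W := \sum_t \sum_(t' | P t t') `|x t| ^+ 2 * (g t * g t').
have split_diag : Z = D + O.
  rewrite /Z -big_split /=; apply: eq_bigr => t _.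
  by rewrite (bigD1 t) //= normCK rmorphM /= (geC0_conj (g_ge0 t)); congr (_ + _); ring.
have O_le : `|O| <= W.
  apply: le_trans (ler_norm_sum _ _ _) _.
  apply: le_trans (_ : \sum_t \sum_(t' | P t t') `|x t| * `|x t'| * (g t * g t') <= _).
    apply: ler_sum => t _; apply: le_trans (ler_norm_sum _ _ _) _.
    apply: ler_sum => t' _; rewrite rmorphM /= (geC0_conj (g_ge0 t')).
    by rewrite !normrM norm_conjC (ger0_norm (g_ge0 t)) (ger0_norm (g_ge0 t')) mulrACA.
  apply: sum_mul_sym_le => [t t'|t t'|t|t t']; rewrite ?mulr_ge0 //.
    by rewrite /P eq_sym; congr (_ && _); rewrite eq_sym.
  by rewrite mulrC.
have -> : \sum_t `|x t| ^+ 2 *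
    (g t * g t - \sum_(t' | (t' != t) && (t == t' %[mod n])) g t * g t') = D - W.
  rewrite -sumrB; apply: eq_bigr => t _; rewrite mulrBr mulr_sumr.
  by congr (_ - _); apply: eq_bigl => t'; rewrite /P andbC.
have D_ge0 : 0 <= D by apply: sumr_ge0 => t _; rewrite !mulr_ge0.
rewrite -(ger0_norm Z_ge0) split_diag.
by apply: le_trans (lerB_normD D O); rewrite (ger0_norm D_ge0) lerB.
Qed.

End WindowedDFT.

Section FrameBounds.
Variables (R : realType) (L : nat).
Implicit Types (x f : 'I_L -> R[i]).

Lemma nsq_ge0 x : 0 <= nsq x.
Proof. by apply: sumr_ge0 => t _; rewrite exprn_ge0. Qed.

Lemma real_of_ge0 (c : R[i]) : 0 <= c -> c = (complex.Re c)%:C%C.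
Proof. by move=> c_ge0; rewrite RRe_real // ger0_real. Qed.

Lemma normr_ip_le x f : `|ip x f| ^+ 2 <= L%:R * nsq f * nsq x.
Proof.
pose u t := `|x t| * `|f t|.
have u_ge0 t : 0 <= u t by rewrite mulr_ge0.
have ip_le : `|ip x f| <= \sum_t u t.
  apply: le_trans (ler_norm_sum _ _ _) _; apply: ler_sum => t _.
  by rewrite normrM norm_conjC.
apply: le_trans (_ : (\sum_t u t) ^+ 2 <= _).
  by rewrite lerXn2r ?nnegrE ?sumr_ge0.
have sqr_sumE : (\sum_t u t) ^+ 2 = \sum_t \sum_(s | true) u t * u s * 1.
  rewrite expr2 mulr_suml; apply: eq_bigr => t _.
  by rewrite mulr_sumr; apply: eq_bigr => s _; rewrite mulr1.
rewrite sqr_sumE; apply: le_trans (sum_mul_sym_le (P := fun _ _ => true)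
  (G := fun _ _ => 1) _ _ u_ge0 _) _ => //.
rewrite exchange_big sumr_const card_ord -mulrA mulr_natl lerMn2r; apply/orP; right.
rewrite /nsq mulr_sumr; apply: ler_sum => t _; rewrite /u mulr1 exprMn mulrC.
rewrite ler_wpM2r ?exprn_ge0 // (bigD1 t) //= lerDl.
by apply: sumr_ge0 => s _; rewrite exprn_ge0.
Qed.

Lemma is_frame_of_lower_bound (J : finType) (P : pred J) (f : J -> 'I_L -> R[i])
    (A : R) :
  0 < A -> (forall x, A%:C%C * nsq x <= \sum_(j | P j) `|ip x (f j)| ^+ 2) ->
  is_frame P f.
Proof.
move=> A_gt0 lower; pose B := A + complex.Re (\sum_j L%:R * nsq (f j)).
have S_ge0 : 0 <= \sum_j L%:R * nsq (f j).
  by rewrite sumr_ge0 // => j _; rewrite mulr_ge0 ?nsq_ge0.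
have A_le_B : A <= B by rewrite lerDl -ler0c -real_of_ge0.
exists A, B; do 2!split=> //; move=> x; rewrite lower /=.
apply: le_trans (_ : \sum_j L%:R * nsq (f j) * nsq x <= _).
  apply: le_trans (_ : \sum_(j | P j) L%:R * nsq (f j) * nsq x <= _).
    by apply: ler_sum => j _; apply: normr_ip_le.
  by apply: ler_sum_subset => // j; rewrite !mulr_ge0 ?nsq_ge0.
rewrite -mulr_suml ler_wpM2r ?nsq_ge0 // (real_of_ge0 S_ge0) lecR.
by rewrite lerDr ltW.
Qed.

Lemma weighted_nsq_ge (h : 'I_L -> R[i]) : (forall t, 0 < h t) ->
  exists2 A : R, 0 < A & forall x, A%:C%C * nsq x <= \sum_t `|x t| ^+ 2 * h t.
Proof.
move=> h_gt0; pose c : R[i] := (1 + \sum_t (h t)^-1)^-1.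
have S_ge0 : 0 <= \sum_t (h t)^-1 by apply: sumr_ge0 => t _; rewrite invr_ge0 ltW.
have c_gt0 : 0 < c by rewrite invr_gt0 ltr_wpDr.
have c_le t : c <= h t.
  rewrite -[h t]invrK lef_pV2 ?posrE ?invr_gt0 ?ltr_wpDr // (bigD1 t) //= addrCA.
  by rewrite lerDl addr_ge0 // sumr_ge0 // => s _; rewrite invr_ge0 ltW.
have c_real : c = (complex.Re c)%:C%C by apply/real_of_ge0/ltW.
exists (complex.Re c); first by rewrite -ltcR -c_real.
move=> x; rewrite -c_real /nsq mulr_sumr; apply: ler_sum => t _.
by rewrite mulrC ler_wpM2l ?exprn_ge0.
Qed.

End FrameBounds.

Lemma eqn_mod_dvdz (m n d : nat) : (m == n %[mod d])%N = (d%:Z %| m%:Z - n%:Z)%Z.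
Proof. by rewrite -eqz_mod_dvd !modz_nat eqz_nat. Qed.

Lemma mem_krange L Mg (t k : int) :
  (k \in krange L Mg t) =
  [&& k != 0, t - (L%:Z - 1) <= k * Mg%:Z <= t & - L%:Z <= k <= L%:Z].
Proof.
rewrite mem_filter -andbA; congr [&& _, _ & _].
apply/mapP/idP => [[j]|k_range]; first by rewrite mem_iota => /andP[_ j_lt] ->; lia.
exists (absz (k + L%:Z)); last by rewrite gez0_abs; [ring | lia].
by rewrite mem_iota /= -ltz_nat gez0_abs; lia.
Qed.

Section Aliases.
Variables (L Mg t : nat).
Hypotheses (t_lt : (t < L)%N) (Mg_gt0 : (0 < Mg)%N).

Definition is_alias (z : int) :=
  [&& 0 <= z < L%:Z, z != t%:Z & (Mg%:Z %| t%:Z - z)%Z].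

Lemma mem_krange_shift z :
  (z \in [seq t%:Z - k * Mg%:Z | k <- krange L Mg t]) = is_alias z.
Proof.
have Mg_neq0 : Mg%:Z != 0 by rewrite eqz_nat -lt0n.
apply/mapP/idP => [[k] | /and3P[z_range z_neq dvd_tz]].
  rewrite mem_krange => /and3P[k_neq0 /andP[lo hi] _] ->; rewrite /is_alias.
  have -> : t%:Z - (t%:Z - k * Mg%:Z) = k * Mg%:Z by ring.
  rewrite dvdz_mull // andbT -subr_eq0 addrAC subrr add0r oppr_eq0.
  by rewrite mulf_neq0 // andbT; lia.
pose k := ((t%:Z - z) %/ Mg%:Z)%Z.
have kE : k * Mg%:Z = t%:Z - z by rewrite divzK.
exists k; last by rewrite kE; ring.
rewrite mem_krange kE; apply/and3P; split; last by nia.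
  apply: contraNneq z_neq => k0.
  by move: kE; rewrite k0 mul0r => /esym/eqP; rewrite subr_eq0 eq_sym.
by lia.
Qed.

Lemma mem_aliases z :
  (z \in [seq t'%:Z | t' <- iota 0 L & (t' != t) && (t == t' %[mod Mg])%N]) =
  is_alias z.
Proof.
apply/mapP/idP => [[t'] | /and3P[/andP[z_ge0 z_lt] z_neq dvd_tz]].
  rewrite mem_filter mem_iota eqn_mod_dvdz => /andP[/andP[t'_neq dvd_tt'] /andP[_ t'_lt]] ->.
  by rewrite /is_alias eqz_nat t'_neq dvd_tt' ltz_nat t'_lt.
exists (absz z); last by rewrite gez0_abs.
rewrite mem_filter mem_iota eqn_mod_dvdz gez0_abs // -ltz_nat gez0_abs // z_lt andbT.
by rewrite -eqz_nat gez0_abs // z_neq dvd_tz.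
Qed.

Lemma krange_sum (V : nmodType) (F : int -> V) :
  \sum_(k <- krange L Mg t) F (t%:Z - k * Mg%:Z) =
  \sum_(t' < L | (t' != t :> nat) && (t == t' %[mod Mg])%N) F t'.
Proof.
have Mg_neq0 : Mg%:Z != 0 by rewrite eqz_nat -lt0n.
rewrite -(big_map (fun k => t%:Z - k * Mg%:Z) xpredT).
rewrite -(big_mkord (fun t' => (t' != t) && (t == t' %[mod Mg])%N) (fun t' => F t')).
rewrite -[in RHS]big_filter -[in RHS](big_map Posz xpredT); apply/perm_big/uniq_perm.
- rewrite map_inj_uniq ?filter_uniq ?map_inj_uniq ?iota_uniq //.
    by move=> j1 j2 /addIr [].

  by move=> k1 k2 /addrI /oppr_inj /(mulIf Mg_neq0).
- by rewrite map_inj_uniq ?filter_uniq ?iota_uniq // => ? ? [].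
by move=> z; rewrite mem_krange_shift /index_iota subn0 mem_aliases.
Qed.

End Aliases.

Lemma ML_gt0 L M : (0 < ML L M)%N.
Proof.
rewrite /ML big_nat_cond; apply: (big_ind (fun x => 0 < x)%N) => //.
  by move=> u v u_gt0 v_gt0; rewrite lcmn_gt0 u_gt0 v_gt0.
by move=> i /andP[/andP[]].
Qed.

Lemma vat_ge0 (R : realType) L (x : 'I_L -> R[i]) z :
  (forall t, 0 <= x t) -> 0 <= vat x z.
Proof. by move=> x_ge0; rewrite /vat; case: insub. Qed.

Section Windows.
Variables (R : realType) (L a : nat) (w : 'I_L -> R[i]).

Definition window (n r : nat) : 'I_L -> R[i] := trans (n * a)%N%:Z (supwin a w r).

Lemma betanr_aliases Mg n r (t : 'I_L) : (0 < Mg)%N ->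
  betanr a w n r 0 t - \sum_(k <- krange L Mg t) betanr a w n r (k * Mg%:Z) t =
  window n r t * window n r t -
  \sum_(t' | (t' != t) && (t == t' %[mod Mg])%N) window n r t * window n r t'.
Proof.
move=> Mg_gt0; rewrite /betanr subr0; congr (_ - _).
pose F z := vat (supwin a w r) (t%:Z - (n * a)%N%:Z) * vat (supwin a w r) (z - (n * a)%N%:Z).
rewrite -(krange_sum (ltn_ord t) Mg_gt0 F).
by apply: eq_bigr => k _; rewrite /F; congr (_ * vat _ _); ring.
Qed.

Hypothesis w_ge0 : forall t, 0 <= w t.

Lemma window_ge0 n r t : 0 <= window n r t.
Proof. by apply: vat_ge0 => s; apply: sumr_ge0 => j _; apply: vat_ge0. Qed.

Lemma ip_phi_dvdn M Mg d m n r (x : 'I_L -> R[i]) :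
  (0 < L)%N -> ML L M = (d * Mg)%N ->
  ip x (phi a M w (d * m) n r) =
  \sum_t (x t * window n r t) * (zeta Mg ^+ (m * t))^*.
Proof.
move=> L_gt0 MLE; apply: eq_bigr => t _; rewrite rmorphM /= (geC0_conj (window_ge0 _ _ _)).
rewrite -[RHS]mulrA; do 2 congr (_ * _); congr (_ ^*).
rewrite /zeta -expiMn /bL MLE !natrM; congr expi.
have [d_gt0 Mg_gt0] : (0 < d)%N /\ (0 < Mg)%N by apply/andP; rewrite -muln_gt0 -MLE ML_gt0.
by field; rewrite !pnatr_eq0 -!lt0n L_gt0 d_gt0 Mg_gt0.
Qed.

End Windows.

Section FrameLowerBound.
Variables (R : realType) (L a M Mg : nat) (w : 'I_L -> R[i]).
Variables (It : 'I_(L %/ a) -> 'I_(L %/ a) -> bool)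
          (I : 'I_(ML L M) -> 'I_(L %/ a) -> 'I_(L %/ a) -> bool).
Hypotheses (L_gt0 : (0 < L)%N) (Mg_gt0 : (0 < Mg)%N) (w_ge0 : forall t, 0 <= w t).
Hypotheses (Mg_dvd : (Mg %| ML L M)%N) (adm : admissible It (fun _ _ => Mg) I).

Definition alias_weight (t : 'I_L) : R[i] :=
  \sum_(n < L %/ a) \sum_(r < L %/ a) (It n r)%:R *
    (betanr a w n r 0 t - \sum_(k <- krange L Mg t) betanr a w n r (k * Mg%:Z) t).

Lemma frame_sum_ge (x : 'I_L -> R[i]) :
  \sum_t `|x t| ^+ 2 * (Mg%:R * alias_weight t) <=
  \sum_(j | I j.1.1 j.1.2 j.2) `|ip x (phi a M w j.1.1 j.1.2 j.2)| ^+ 2.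
Proof.
have [_ [_ adm_sel]] := adm; set d := (ML L M %/ Mg)%N.
have MLE : ML L M = (d * Mg)%N by rewrite divnK.
have d_gt0 : (0 < d)%N by move: (ML_gt0 L M); rewrite MLE muln_gt0 => /andP[].
pose T (m n r : nat) := `|ip x (phi a M w m n r)| ^+ 2.
pose P (m : 'I_(ML L M)) (n r : 'I_(L %/ a)) := It n r && (d %| m)%N.
apply: le_trans (_ : \sum_(j | P j.1.1 j.1.2 j.2) T j.1.1 j.1.2 j.2 <= _); last first.
  apply: ler_sum_subset => [[[m n] r] /andP[/= Inr d_dvd_m]|j]; last exact: exprn_ge0.
  rewrite unfold_in /=; apply: (adm_sel n r Inr (m %/ d)%N); first by rewrite ltn_divLR // mulnC -MLE.
  by rewrite mulnC divnK.
pose B n r t := betanr a w n r 0 t - \sum_(k <- krange L Mg t) betanr a w n r (k * Mg%:Z) t.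
have -> : \sum_t `|x t| ^+ 2 * (Mg%:R * alias_weight t) =
    \sum_n \sum_r (It n r)%:R * (Mg%:R * \sum_t `|x t| ^+ 2 * B n r t).
  transitivity (\sum_t \sum_n \sum_r (It n r)%:R * (Mg%:R * (`|x t| ^+ 2 * B n r t))).
    apply: eq_bigr => t _; rewrite !mulr_sumr; apply: eq_bigr => n _.
    by rewrite !mulr_sumr; apply: eq_bigr => r _; rewrite /B; ring.
  rewrite exchange_big; apply: eq_bigr => n _; rewrite exchange_big.
  by apply: eq_bigr => r _; rewrite !mulr_sumr.
rewrite (sum_triple P (fun m n r => T m n r)); apply: ler_sum => n _.
apply: ler_sum => r _; rewrite /P; case: (It n r); last first.
  by rewrite mul0r sumr_ge0 // => m _; rewrite exprn_ge0.
rewrite mul1r (eq_bigl (fun m : 'I_(ML L M) => d %| m)%N) // MLE.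
rewrite (sum_dvdn_ord (fun m => T m n r)) //.
under [leRHS]eq_bigr => m _ do rewrite /T (@ip_phi_dvdn R L a w w_ge0 M Mg d m n r x L_gt0 MLE).
apply: (le_trans _ (sum_normr_dft_mul_ge x Mg_gt0 (window_ge0 a w_ge0 n r))).
rewrite ler_pM2l ?ltr0n //; apply: ler_sum => t _.
by rewrite /B betanr_aliases.
Qed.

End FrameLowerBound.

Theorem theorem1 (R : realType) (L a M : nat) (w : 'I_L -> R[i])
  (It : 'I_(L %/ a) -> 'I_(L %/ a) -> bool)
  (I : 'I_(ML L M) -> 'I_(L %/ a) -> 'I_(L %/ a) -> bool) (Mg : nat) :
  (0 < L)%N -> (0 < a)%N -> (a %| L)%N -> (0 < M)%N ->
  (forall t, 0 <= w t) ->
  ordered_partition It ->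
  admissible It (fun _ _ => Mg) I ->
  (1 <= Mg <= L)%N ->
  (forall t : 'I_L,
     0 < \sum_(n < L %/ a) \sum_(r < L %/ a)
           (It n r)%:R * (betanr a w n r 0 t
                          - \sum_(k <- krange L Mg t) betanr a w n r (k * Mg%:Z) t)) ->
  is_frame (fun j : 'I_(ML L M) * 'I_(L %/ a) * 'I_(L %/ a) => I j.1.1 j.1.2 j.2)
           (fun j => @phi R L a M w j.1.1 j.1.2 j.2).
Proof.
move=> L_gt0 _ _ _ w_ge0 [[n0 [r0 _]] _] adm /andP[Mg_gt0 _] weight_gt0.
have Mg_dvd : (Mg %| ML L M)%N := (adm.1 n0 r0).2.
have [A A_gt0 lower] : exists2 A : R, 0 < A & forall x,
    A%:C%C * nsq x <= \sum_t `|x t| ^+ 2 * (Mg%:R * alias_weight Mg w It t).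
  by apply: weighted_nsq_ge => t; rewrite mulr_gt0 ?ltr0n ?weight_gt0.
apply: (is_frame_of_lower_bound A_gt0) => x.
exact: le_trans (lower x) (frame_sum_ge L_gt0 Mg_gt0 w_ge0 Mg_dvd adm x).
Qed.
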